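(* Let $v=(x,y)\in T$ be a point with at least one irrational coordinate. Then $G^k(v)\neq(0,0)$ for all $k\ge0$, so its itinerary is defined, and: the itinerary of $v$ consists only of symbols of type $\mathbb{A}$ if and only if $y = 0$. Moreover, if the itinerary is $\mathbb{A}_{a_1},\mathbb{A}_{a_2},\dots$, then $x = [0;a_1,a_2,\dots]$ (regular continued fraction).
   Context: Let $T = \{(x,y)\in\mathbb{R}^2 : 0 \le y \le x \le 1\}$. For integers $n\ge1$ define $\mathbb{A}_n = \{(x,y) : \frac{1}{n+1} < x \le \frac1n,\ 0 \le y \le 1-nx\}$ and $\mathbb{B}_n = \{(x,y) : 1-nx < y \le x \le \frac1n\}$; these together with $\{(0,0)\}$ partition $T$. The 2-dimensional Gauss map $G:T\to T$ is $G(0,0)=(0,0)$, $G(x,y)=\left(\frac1x-n,\frac yx\right)$ on $\mathbb{A}_n$, $G(x,y)=\left(\frac{1-y}{x}-n+1,\frac{x-y}{x}\right)$ on $\mathbb{B}_n$. For a point $v$ whose forward orbit never hits $(0,0)$, its itinerary is the sequence of symbols $\mathbb{X}_{a_1},\mathbb{X}_{a_2},\dots$ ($\mathbb{X}\in\{\mathbb{A},\mathbb{B}\}$, $a_k\ge1$) with $G^{k-1}(v)\in\mathbb{X}_{a_k}$ for all $k\ge1$. *)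

From Stdlib Require Import Reals Lra Lia ZArith.
Open Scope R_scope.

Definition inT (p : R * R) : Prop :=
  0 <= snd p /\ snd p <= fst p /\ fst p <= 1.

Definition inA (n : nat) (p : R * R) : Prop :=
  / (INR n + 1) < fst p /\ fst p <= / INR n /\
  0 <= snd p /\ snd p <= 1 - INR n * fst p.

Definition inB (n : nat) (p : R * R) : Prop :=
  1 - INR n * fst p < snd p /\ snd p <= fst p /\ fst p <= / INR n.

(* The index n = floor(1/x) of the strip 1/(n+1) < x <= 1/n (for 0 < x <= 1). *)
Definition strip (x : R) : nat := Z.to_nat (up (/ x) - 1).

Definition G (p : R * R) : R * R :=
  let (x, y) := p in
  if Req_EM_T x 0 then (0, 0) else
  let n := INR (strip x) in
  if Rle_dec y (1 - n * x) then (/ x - n, y / x)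
  else ((1 - y) / x - n + 1, (x - y) / x).

Fixpoint Giter (k : nat) (p : R * R) : R * R :=
  match k with
  | O => p
  | S k' => G (Giter k' p)
  end.

Inductive symbol : Type := SymA (n : nat) | SymB (n : nat).

Definition in_symbol (s : symbol) (p : R * R) : Prop :=
  match s with
  | SymA n => (1 <= n)%nat /\ inA n p
  | SymB n => (1 <= n)%nat /\ inB n p
  end.

Definition is_A (s : symbol) : Prop :=
  match s with SymA _ => True | SymB _ => False end.

(* s is the itinerary of v: s k is the symbol X_{a_{k+1}} with G^k(v) in it. *)
Definition is_itinerary (v : R * R) (s : nat -> symbol) : Prop :=
  forall k : nat, in_symbol (s k) (Giter k v).

Definition rational (r : R) : Prop :=
  exists p q : Z, q <> 0%Z /\ r = IZR p / IZR q.

(* Finite continued fraction [0; a 0, a 1, ..., a (n-1)]. *)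
Fixpoint cf_fin (n : nat) (a : nat -> nat) : R :=
  match n with
  | O => 0
  | S n' => / (INR (a O) + cf_fin n' (fun k => a (S k)))
  end.

Definition cf_value (a : nat -> nat) (x : R) : Prop :=
  Un_cv (fun n => cf_fin n a) x.

(* A point with an irrational coordinate keeps one under G, since each branch
   of G is inverted by rational formulas; in particular its orbit never reaches
   the vertex x = 0 and stays in the cells A_n, B_n.  On A_n the product
   x * G(x,y)_1 = 1 - n x is at most 1/2, so two consecutive A-steps at least
   double the second coordinate, which stays in [0,1]: an all-A orbit forces
   y = 0.  Conversely y = 0 is preserved by G, while every B-cell has y > 0.
   Along an all-A orbit the first coordinate follows the Gauss map, so
   x = [0; a_1, ..., a_n + x_n]; as t |-> 1 / (a + t) contracts by 1/4 over two
   steps on [0,1], the convergents [0; a_1, ..., a_n] tend to x. *)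
From Stdlib Require Import Reals Lra Lia ZArith.
Open Scope R_scope.

Lemma INR_ge_1 (m : nat) : (1 <= m)%nat -> 1 <= INR m.
Proof. intro Hm. apply (le_INR 1 m) in Hm. simpl in Hm. exact Hm. Qed.

Lemma strip_bounds (x : R) : 0 < x <= 1 ->
  (1 <= strip x)%nat /\ / (INR (strip x) + 1) < x /\ x <= / INR (strip x).
Proof.
  intros [Hx0 Hx1].
  destruct (archimed (/ x)) as [Hup1 Hup2].
  assert (Hinv : 1 <= / x) by (rewrite <- Rinv_1; apply Rinv_le_contravar; lra).
  assert (Hz : (1 < up (/ x))%Z) by (apply lt_IZR; simpl; lra).
  assert (Hn : INR (strip x) = IZR (up (/ x)) - 1).
  { unfold strip. rewrite INR_IZR_INZ, Z2Nat.id by lia. apply minus_IZR. }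
  assert (Hs : (1 <= strip x)%nat) by (unfold strip; lia).
  split; [exact Hs|]. rewrite Hn.
  split.
  - rewrite <- (Rinv_inv x) at 2.
    apply Rinv_lt_contravar; [apply Rmult_lt_0_compat|]; lra.
  - rewrite <- (Rinv_inv x) at 1. apply Rinv_le_contravar; lra.
Qed.

Lemma strip_eq (m : nat) (x : R) :
  (1 <= m)%nat -> / (INR m + 1) < x -> x <= / INR m -> strip x = m.
Proof.
  intros Hm Hlo Hhi.
  assert (Hm1 := INR_ge_1 m Hm).
  assert (Hx : 0 < x) by (assert (0 < / (INR m + 1)) by (apply Rinv_0_lt_compat; lra); lra).
  assert (Hlo' : INR m <= / x).
  { rewrite <- (Rinv_inv (INR m)). apply Rinv_le_contravar; assumption. }
  assert (Hhi' : / x < INR m + 1).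
  { rewrite <- (Rinv_inv (INR m + 1)).
    apply Rinv_lt_contravar; [apply Rmult_lt_0_compat|]; auto.
    apply Rinv_0_lt_compat; lra. }
  assert (Hup : (Z.of_nat m + 1)%Z = up (/ x)).
  { apply tech_up; rewrite plus_IZR, <- INR_IZR_INZ; simpl; lra. }
  unfold strip. rewrite <- Hup, Z.add_simpl_r. apply Nat2Z.id.
Qed.

Lemma inv_le_mult (n : nat) (x : R) : (1 <= n)%nat -> x <= / INR n -> INR n * x <= 1.
Proof.
  intros Hn Hx. assert (Hn1 := INR_ge_1 n Hn).
  apply (Rmult_le_compat_l (INR n)) in Hx; [|lra].
  rewrite Rinv_r in Hx; lra.
Qed.

Lemma G_A_branch (x y : R) : x <> 0 -> y <= 1 - INR (strip x) * x ->
  G (x, y) = (/ x - INR (strip x), y / x).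
Proof.
  intros Hx Hy. unfold G. cbv zeta.
  destruct (Req_EM_T x 0); [contradiction|].
  destruct (Rle_dec _ _); [reflexivity|contradiction].
Qed.

Lemma G_B_branch (x y : R) : x <> 0 -> ~ y <= 1 - INR (strip x) * x ->
  G (x, y) = ((1 - y) / x - INR (strip x) + 1, (x - y) / x).
Proof.
  intros Hx Hy. unfold G. cbv zeta.
  destruct (Req_EM_T x 0); [contradiction|].
  destruct (Rle_dec _ _); [contradiction|reflexivity].
Qed.

Lemma inA_bounds (m : nat) (x y : R) : (1 <= m)%nat -> inA m (x, y) ->
  0 < x /\ x <= 1 /\ 0 <= y /\ y <= 1.
Proof.
  unfold inA; cbn [fst snd]. intros Hm (Hlo & Hhi & Hy0 & Hy1).
  assert (Hm1 := INR_ge_1 m Hm).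
  assert (0 < / (INR m + 1)) by (apply Rinv_0_lt_compat; lra).
  assert (/ INR m <= 1) by (rewrite <- Rinv_1; apply Rinv_le_contravar; lra).
  repeat split; nra.
Qed.

Lemma G_inA (m : nat) (x y : R) : (1 <= m)%nat -> inA m (x, y) ->
  G (x, y) = (/ x - INR m, y / x).
Proof.
  intros Hm HA.
  destruct (inA_bounds m x y Hm HA) as [Hx _].
  destruct HA as (Hlo & Hhi & _ & Hy). cbn [fst snd] in *.
  assert (Hs := strip_eq m x Hm Hlo Hhi).
  rewrite G_A_branch, Hs; [reflexivity|lra|now rewrite Hs].
Qed.

Lemma inB_snd_pos (m : nat) (p : R * R) : (1 <= m)%nat -> inB m p -> 0 < snd p.
Proof.
  intros Hm (Hy & _ & Hx). assert (Hmx := inv_le_mult m (fst p) Hm Hx). lra.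
Qed.

Lemma snd_G_x_0 (x : R) : 0 < x <= 1 -> snd (G (x, 0)) = 0.
Proof.
  intros Hx. destruct (strip_bounds x Hx) as (Hs & _ & Hhi).
  assert (Hsx := inv_le_mult _ _ Hs Hhi).
  rewrite G_A_branch by lra. cbn [snd]. unfold Rdiv. apply Rmult_0_l.
Qed.

Lemma Giter_snd_0 (x : R) (k : nat) :
  (forall j, 0 < fst (Giter j (x, 0)) <= 1) -> snd (Giter k (x, 0)) = 0.
Proof.
  intros Hpos. induction k as [|k IHk]; [reflexivity|].
  cbn [Giter]. specialize (Hpos k).
  destruct (Giter k (x, 0)) as [u w]. cbn [fst snd] in *. subst w.
  now apply snd_G_x_0.
Qed.

Lemma Giter_shift (k : nat) (p : R * R) : Giter k (G p) = Giter (S k) p.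
Proof. induction k as [|k IHk]; [reflexivity|]. simpl. now rewrite IHk. Qed.

(** * Points with an irrational coordinate *)

Lemma rational_IZR (z : Z) : rational (IZR z).
Proof. exists z, 1%Z. split; [lia|]. simpl. field. Qed.

Lemma rational_INR (n : nat) : rational (INR n).
Proof. rewrite INR_IZR_INZ. apply rational_IZR. Qed.

Lemma rational_plus (a b : R) : rational a -> rational b -> rational (a + b).
Proof.
  intros (p1 & q1 & Hq1 & ->) (p2 & q2 & Hq2 & ->).
  exists (p1 * q2 + p2 * q1)%Z, (q1 * q2)%Z. split; [lia|].
  rewrite plus_IZR, !mult_IZR. field. split; now apply not_0_IZR.
Qed.

Lemma rational_mult (a b : R) : rational a -> rational b -> rational (a * b).
Proof.
  intros (p1 & q1 & Hq1 & ->) (p2 & q2 & Hq2 & ->).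
  exists (p1 * p2)%Z, (q1 * q2)%Z. split; [lia|].
  rewrite !mult_IZR. field. split; now apply not_0_IZR.
Qed.

Lemma rational_opp (a : R) : rational a -> rational (- a).
Proof.
  intros (p & q & Hq & ->). exists (- p)%Z, q. split; [exact Hq|].
  rewrite opp_IZR. field. now apply not_0_IZR.
Qed.

Lemma rational_minus (a b : R) : rational a -> rational b -> rational (a - b).
Proof. intros Ha Hb. apply rational_plus; [exact Ha|now apply rational_opp]. Qed.

Lemma rational_inv (a : R) : a <> 0 -> rational a -> rational (/ a).
Proof.
  intros Ha (p & q & Hq & ->).
  assert (Hp : p <> 0%Z) by (intros ->; apply Ha; unfold Rdiv; ring).
  exists q, p. split; [exact Hp|]. field. split; now apply not_0_IZR.
Qed.

Lemma G_maps_T (p : R * R) : inT p -> 0 < fst p -> inT (G p).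
Proof.
  destruct p as [x y]. unfold inT; cbn [fst snd]. intros (Hy0 & Hyx & Hx1) Hx0.
  destruct (strip_bounds x (conj Hx0 Hx1)) as (Hs & Hlo & Hhi).
  assert (Hn1 := INR_ge_1 _ Hs).
  assert (Hhi' := inv_le_mult _ _ Hs Hhi).
  assert (Hinv : / x < INR (strip x) + 1).
  { rewrite <- (Rinv_inv (INR (strip x) + 1)).
    apply Rinv_lt_contravar; [|exact Hlo]. apply Rmult_lt_0_compat; [|lra].
    apply Rinv_0_lt_compat; lra. }
  assert (Hinv' : INR (strip x) <= / x).
  { rewrite <- (Rinv_inv (INR (strip x))). apply Rinv_le_contravar; lra. }
  assert (Hu : x * / x = 1) by (field; lra).
  assert (0 < / x) by (apply Rinv_0_lt_compat; lra).
  destruct (Rle_dec y (1 - INR (strip x) * x)) as [HA|HB].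
  - rewrite G_A_branch by lra. cbn [fst snd].
    unfold Rdiv. repeat split; nra.
  - rewrite G_B_branch by lra. cbn [fst snd].
    unfold Rdiv. repeat split; nra.
Qed.

Lemma G_rational_inv (x y : R) : x <> 0 ->
  rational (fst (G (x, y))) -> rational (snd (G (x, y))) -> rational x /\ rational y.
Proof.
  intros Hx.
  assert (Hrx : rational (/ x) -> rational x).
  { intro H. rewrite <- (Rinv_inv x). apply rational_inv; [|exact H].
    now apply Rinv_neq_0_compat. }
  assert (Hry : rational x -> rational (y / x) -> rational y).
  { intros H1 H2. replace y with (y / x * x) by (field; exact Hx).
    now apply rational_mult. }
  destruct (Rle_dec y (1 - INR (strip x) * x)) as [HA|HB].
  - rewrite G_A_branch by assumption. cbn [fst snd]. intros H1 H2.
    assert (Hx' : rational x).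
    { apply Hrx. replace (/ x) with (/ x - INR (strip x) + INR (strip x)) by ring.
      apply rational_plus; [exact H1|apply rational_INR]. }
    split; [exact Hx'|now apply Hry].
  - rewrite G_B_branch by assumption. cbn [fst snd]. intros H1 H2.
    assert (Hyx : rational (y / x)).
    { replace (y / x) with (1 - (x - y) / x) by (field; exact Hx).
      apply rational_minus; [apply (rational_IZR 1)|exact H2]. }
    assert (Hx' : rational x).
    { apply Hrx.
      replace (/ x) with ((1 - y) / x - INR (strip x) + 1 + y / x + INR (strip x) - 1)
        by (field; exact Hx).
      apply rational_minus; [|apply (rational_IZR 1)].
      apply rational_plus; [apply rational_plus; [exact H1|exact Hyx]|apply rational_INR]. }
    split; [exact Hx'|now apply Hry].
Qed.

Definition irrational_point (p : R * R) : Prop :=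
  inT p /\ ~ (rational (fst p) /\ rational (snd p)).

Lemma irrational_point_fst_pos (p : R * R) : irrational_point p -> 0 < fst p <= 1.
Proof.
  destruct p as [x y]. intros ((Hy0 & Hyx & Hx1) & Hirr). cbn [fst snd] in *.
  split; [|exact Hx1].
  destruct (Req_dec x 0) as [->|Hx]; [|lra].
  exfalso. apply Hirr. replace y with 0 by lra. split; apply (rational_IZR 0).
Qed.

Lemma irrational_point_G (p : R * R) : irrational_point p -> irrational_point (G p).
Proof.
  intros Hp. destruct (irrational_point_fst_pos p Hp) as [Hx _].
  destruct Hp as [HT Hirr]. split; [now apply G_maps_T|].
  destruct p as [x y]. intros [H1 H2]. apply Hirr.
  apply G_rational_inv; [apply Rgt_not_eq, Hx|exact H1|exact H2].
Qed.

Lemma irrational_point_Giter (p : R * R) (k : nat) :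
  irrational_point p -> irrational_point (Giter k p).
Proof. intros Hp. induction k as [|k IHk]; [exact Hp|]. now apply irrational_point_G. Qed.

Definition symbol_of (p : R * R) : symbol :=
  if Rle_dec (snd p) (1 - INR (strip (fst p)) * fst p)
  then SymA (strip (fst p)) else SymB (strip (fst p)).

Lemma in_symbol_of (p : R * R) : inT p -> 0 < fst p <= 1 -> in_symbol (symbol_of p) p.
Proof.
  destruct p as [x y]. unfold inT, symbol_of; cbn [fst snd]. intros (Hy0 & Hyx & _) Hx.
  destruct (strip_bounds x Hx) as (Hs & Hlo & Hhi).
  destruct (Rle_dec y (1 - INR (strip x) * x)) as [HA|HB]; split; try exact Hs.
  - unfold inA; cbn [fst snd]. repeat split; assumption.
  - unfold inB; cbn [fst snd]. repeat split; [lra|assumption|assumption].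
Qed.

(** * All-A itineraries *)

Lemma inA_inA_snd_double (m m' : nat) (p : R * R) : (1 <= m)%nat -> (1 <= m')%nat ->
  inA m p -> inA m' (G p) -> 2 * snd p <= snd (G (G p)).
Proof.
  destruct p as [x y]. intros Hm Hm' HA HA'.
  rewrite (G_inA m x y Hm HA) in HA' |- *.
  rewrite (G_inA m' _ _ Hm' HA'). cbn [snd].
  destruct (inA_bounds _ _ _ Hm' HA') as [Hw _].
  destruct HA as (Hlo & Hhi & Hy0 & Hy1). cbn [fst snd] in *.
  assert (Hm1 := INR_ge_1 m Hm).
  assert (Hx : 0 < x) by (assert (0 < / (INR m + 1)) by (apply Rinv_0_lt_compat; lra); lra).
  assert (Hlo' : 1 < (INR m + 1) * x).
  { apply (Rmult_lt_compat_l (INR m + 1)) in Hlo; [|lra]. rewrite Rinv_r in Hlo; lra. }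
  set (w := / x - INR m) in *.
  assert (Hxw : x * w = 1 - INR m * x) by (unfold w; field; lra).
  assert (Hxw2 : 0 < x * w <= / 2) by (split; nra).
  assert (H2 : 2 <= / (x * w)).
  { rewrite <- (Rinv_inv 2). apply Rinv_le_contravar; lra. }
  replace (y / x / w) with (y * / (x * w)) by (field; split; lra).
  nra.
Qed.

Lemma pow2_bounded_nonpos (c : R) : (forall j, 2 ^ j * c <= 1) -> c <= 0.
Proof.
  intros H. destruct (Rle_or_lt c 0) as [Hc|Hc]; [exact Hc|exfalso].
  destruct (Pow_x_infinity 2) with (b := 2 / c) as [N HN].
  { rewrite Rabs_right; lra. }
  specialize (HN N (le_n N)). rewrite Rabs_right in HN by (left; apply pow_lt; lra).
  specialize (H N).
  assert (2 / c * c = 2) by (field; lra).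
  nra.
Qed.

Lemma all_A_snd_0 (v : R * R) :
  (forall k, exists m, (1 <= m)%nat /\ inA m (Giter k v)) -> snd v = 0.
Proof.
  intros HA.
  assert (Hdouble : forall j, 2 ^ j * snd v <= snd (Giter (2 * j) v)).
  { induction j as [|j IHj]; [simpl; lra|].
    destruct (HA (2 * j)%nat) as (m & Hm & Hin).
    destruct (HA (S (2 * j))) as (m' & Hm' & Hin').
    assert (H := inA_inA_snd_double m m' _ Hm Hm' Hin Hin').
    replace (2 * S j)%nat with (S (S (2 * j))) by lia.
    cbn [Giter pow]. rewrite Rmult_assoc. lra. }
  assert (Hle : snd v <= 0).
  { apply pow2_bounded_nonpos. intro j.
    destruct (HA (2 * j)%nat) as (m & Hm & Hin).
    destruct (Giter (2 * j) v) as [x y] eqn:E.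
    destruct (inA_bounds m x y Hm Hin) as (_ & _ & _ & Hy).
    specialize (Hdouble j). rewrite E in Hdouble. cbn [snd] in Hdouble. lra. }
  destruct (HA 0%nat) as (m & Hm & Hin). destruct v as [x y].
  destruct (inA_bounds m x y Hm Hin) as (_ & _ & Hy & _). cbn [snd] in *. lra.
Qed.

(** * Continued fractions *)

(* [cf_tail n a t] = [0; a 0, ..., a (n-1) + t]; [cf_fin n a] is the case t = 0. *)
Fixpoint cf_tail (n : nat) (a : nat -> nat) (t : R) : R :=
  match n with
  | O => t
  | S n' => / (INR (a O) + cf_tail n' (fun k => a (S k)) t)
  end.

Lemma cf_fin_tail_0 (n : nat) (a : nat -> nat) : cf_fin n a = cf_tail n a 0.
Proof. revert a. induction n as [|n IHn]; intro a; simpl; [reflexivity|now rewrite IHn]. Qed.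

Lemma cf_tail_range (n : nat) (a : nat -> nat) (t : R) :
  (forall k, (1 <= a k)%nat) -> 0 <= t <= 1 -> 0 <= cf_tail n a t <= 1.
Proof.
  revert a. induction n as [|n IHn]; intros a Ha Ht; simpl; [exact Ht|].
  specialize (IHn (fun k => a (S k)) (fun k => Ha (S k))).
  assert (H1 := INR_ge_1 _ (Ha 0%nat)).
  split.
  - left. apply Rinv_0_lt_compat. lra.
  - rewrite <- Rinv_1. apply Rinv_le_contravar; lra.
Qed.

Lemma inv_shift_lipschitz (A u v : R) : 1 <= A -> 0 <= u -> 0 <= v ->
  Rabs (/ (A + u) - / (A + v)) <= Rabs (u - v).
Proof.
  intros HA Hu Hv.
  replace (/ (A + u) - / (A + v)) with ((v - u) * / ((A + u) * (A + v))) by (field; lra).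
  rewrite (Rabs_minus_sym u v), Rabs_mult, (Rabs_right (/ _))
    by (left; apply Rinv_0_lt_compat; nra).
  assert (/ ((A + u) * (A + v)) <= 1) by (rewrite <- Rinv_1; apply Rinv_le_contravar; nra).
  assert (0 <= Rabs (v - u)) by apply Rabs_pos.
  nra.
Qed.

Lemma inv_shift2_contract (A B u v : R) : 1 <= A -> 1 <= B -> 0 <= u -> 0 <= v ->
  Rabs (/ (A + / (B + u)) - / (A + / (B + v))) <= / 4 * Rabs (u - v).
Proof.
  intros HA HB Hu Hv.
  assert (2 <= A * (B + u) + 1) by nra.
  assert (2 <= A * (B + v) + 1) by nra.
  assert (0 < / (B + u)) by (apply Rinv_0_lt_compat; lra).
  assert (0 < / (B + v)) by (apply Rinv_0_lt_compat; lra).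
  replace (/ (A + / (B + u)) - / (A + / (B + v))) with
    ((u - v) * / ((A * (B + u) + 1) * (A * (B + v) + 1))) by (field; repeat split; lra).
  rewrite Rabs_mult, (Rabs_right (/ _)) by (left; apply Rinv_0_lt_compat; nra).
  assert (/ ((A * (B + u) + 1) * (A * (B + v) + 1)) <= / 4)
    by (apply Rinv_le_contravar; nra).
  assert (0 <= Rabs (u - v)) by apply Rabs_pos.
  nra.
Qed.

Lemma cf_tail_contract (n : nat) (a : nat -> nat) (s t : R) :
  (forall k, (1 <= a k)%nat) -> 0 <= s <= 1 -> 0 <= t <= 1 ->
  Rabs (cf_tail n a s - cf_tail n a t) <= 2 * (/ 2) ^ n * Rabs (s - t).
Proof.
  intros Ha Hs Ht. revert a Ha.
  enough (H : forall n a, (forall k, (1 <= a k)%nat) ->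
    Rabs (cf_tail n a s - cf_tail n a t) <= 2 * (/ 2) ^ n * Rabs (s - t) /\
    Rabs (cf_tail (S n) a s - cf_tail (S n) a t) <= 2 * (/ 2) ^ S n * Rabs (s - t))
    by (intros a Ha; apply H, Ha).
  clear n. induction n as [|n IHn]; intros a Ha.
  - assert (0 <= Rabs (s - t)) by apply Rabs_pos.
    split; simpl; [lra|].
    replace (2 * (/ 2 * 1)) with 1 by field. rewrite Rmult_1_l.
    apply inv_shift_lipschitz; [apply INR_ge_1, Ha|lra|lra].
  - set (a'' := fun k => a (S (S k))).
    assert (Ha'' : forall k, (1 <= a'' k)%nat) by (intro k; apply Ha).
    split; [apply (IHn a Ha)|].
    destruct (IHn a'' Ha'') as [IH _].
    assert (Rs := cf_tail_range n a'' s Ha'' Hs).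
    assert (Rt := cf_tail_range n a'' t Ha'' Ht).
    simpl cf_tail. fold a''. eapply Rle_trans.
    + apply inv_shift2_contract; [apply INR_ge_1, Ha|apply INR_ge_1, Ha|lra|lra].
    + simpl pow. lra.
Qed.

Lemma cf_value_of_tails (a : nat -> nat) (x : R) (t : nat -> R) :
  (forall k, (1 <= a k)%nat) -> (forall n, 0 <= t n <= 1) ->
  (forall n, x = cf_tail n a (t n)) -> cf_value a x.
Proof.
  intros Ha Ht Hx eps Heps.
  destruct (pow_lt_1_zero (/ 2)) with (y := eps / 2) as [N HN];
    [rewrite Rabs_right; lra|lra|].
  exists N. intros n Hn. unfold R_dist.
  rewrite cf_fin_tail_0, (Hx n).
  assert (C := cf_tail_contract n a 0 (t n) Ha ltac:(lra) (Ht n)).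
  specialize (HN n Hn). specialize (Ht n).
  rewrite Rabs_right in HN by (left; apply pow_lt; lra).
  rewrite (Rabs_left1 (0 - t n)) in C by lra.
  assert (0 < (/ 2) ^ n) by (apply pow_lt; lra).
  nra.
Qed.

Lemma all_A_cf_tail (n : nat) (p : R * R) (a : nat -> nat) :
  (forall k, (1 <= a k)%nat /\ inA (a k) (Giter k p)) ->
  fst p = cf_tail n a (fst (Giter n p)).
Proof.
  revert p a. induction n as [|n IHn]; intros [x y] a HA; [reflexivity|].
  rewrite <- Giter_shift. cbn [cf_tail].
  rewrite <- IHn by (intro k; rewrite Giter_shift; apply HA).
  destruct (HA 0%nat) as [Hm Hin]. cbn [Giter] in Hin.
  destruct (inA_bounds _ _ _ Hm Hin) as [Hx _].
  rewrite (G_inA _ _ _ Hm Hin). cbn [fst].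
  replace (INR (a 0%nat) + (/ x - INR (a 0%nat))) with (/ x) by ring.
  now rewrite Rinv_inv.
Qed.

Theorem mainTheorem10 (x y : R) :
  inT (x, y) ->
  (~ rational x \/ ~ rational y) ->
  (forall k : nat, Giter k (x, y) <> (0, 0)) /\
  (exists s : nat -> symbol, is_itinerary (x, y) s) /\
  (forall s : nat -> symbol, is_itinerary (x, y) s ->
     ((forall k : nat, is_A (s k)) <-> y = 0)) /\
  (forall a : nat -> nat,
     is_itinerary (x, y) (fun k => SymA (a k)) -> cf_value a x).
Proof.
  intros HT Hirr.
  assert (Hk : forall k, irrational_point (Giter k (x, y))).
  { intro k. apply irrational_point_Giter. split; [exact HT|]. cbn [fst snd]. tauto. }
  assert (Hpos : forall k, 0 < fst (Giter k (x, y)) <= 1)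
    by (intro k; apply irrational_point_fst_pos, Hk).
  split; [|split; [|split]].
  - intros k E. specialize (Hpos k). rewrite E in Hpos. simpl in Hpos. lra.
  - exists (fun k => symbol_of (Giter k (x, y))). intro k.
    apply in_symbol_of; [apply Hk|apply Hpos].
  - intros s Hs. split.
    + intro HA. apply (all_A_snd_0 (x, y)). intro k.
      specialize (Hs k). specialize (HA k).
      destruct (s k) as [m|m]; [now exists m|contradiction].
    + intros ->. intro k. specialize (Hs k).
      destruct (s k) as [m|m]; [exact I|exfalso].
      destruct Hs as [Hm HB]. apply (inB_snd_pos m _ Hm) in HB.
      rewrite (Giter_snd_0 x k Hpos) in HB. lra.
  - intros a Ha.
    apply (cf_value_of_tails a x (fun n => fst (Giter n (x, y)))).
    + intro k. apply (Ha k).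
    + intro n. specialize (Hpos n). lra.
    + intro n. apply (all_A_cf_tail n (x, y) a Ha).
Qed.
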